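(* Let $f_0,g_0:\mathbb{R}^n\to[-\infty,\infty]$ be proper, let $h:\mathbb{R}^m\to\mathbb{R}$ be Lipschitz continuous with modulus $\kappa:\mathbb{R}_+\to\mathbb{R}_+$, and let $f_i,g_i:\mathbb{R}^n\to\mathbb{R}$, $i=1,\dots,m$, be Lipschitz continuous with common modulus $\lambda:\mathbb{R}_+\to\mathbb{R}_+$. Set $F=(f_1,\dots,f_m)$, $G=(g_1,\dots,g_m)$, $f=f_0+h\circ F$ and $g=g_0+h\circ G$. Fix $\rho\in\mathbb{R}_+$ and let $\bar\rho\ge\rho+\max\{\sup_{x\in\mathbb{B}_2(0,\rho)}|h(F(x))|,\ \sup_{x\in\mathbb{B}_2(0,\rho)}|h(G(x))|\}$, $\hat\rho>\rho+\hat d_{\bar\rho}(\mathrm{epi}\,f_0,\mathrm{epi}\,g_0)$, and $\rho^*\ge\max\{\sup_{x\in\mathbb{B}_2(0,\hat\rho)}\|F(x)\|_2,\ \sup_{x\in\mathbb{B}_2(0,\hat\rho)}\|G(x)\|_2\}$. Then $$\hat d_\rho(\mathrm{epi}\,f,\mathrm{epi}\,g)\le\big(1+\sqrt m\,\kappa(\rho^* )\lambda(\hat\rho)\big)\,\hat d_{\bar\rho}(\mathrm{epi}\,f_0,\mathrm{epi}\,g_0)+\kappa(\rho^* )\sup_{x\in\mathbb{B}_2(0,\rho)}\|F(x)-G(x)\|_2,$$ where all truncated Hausdorff distances are taken in $\mathbb{R}^{n+1}$ with the norm $\|(x,\alpha)\|=\max\{\|x\|_2,|\alpha|\}$.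
   Context: A function is proper if it never takes the value $-\infty$ and is finite somewhere. $\mathrm{epi}\,f=\{(x,\alpha)\in\mathbb{R}^n\times\mathbb{R}\mid f(x)\le\alpha\}$. $\mathbb{B}_2(0,r)=\{x\mid\|x\|_2\le r\}$. A function $\psi:\mathbb{R}^k\to\mathbb{R}$ is Lipschitz continuous with modulus $\kappa:\mathbb{R}_+\to\mathbb{R}_+$ if $|\psi(u)-\psi(\bar u)|\le\kappa(r)\|u-\bar u\|_2$ for all $r\in\mathbb{R}_+$ and all $u,\bar u\in\mathbb{B}_2(0,r)$. For a norm $\|\cdot\|$ on a Euclidean space, $\mathrm{dist}(x,D)=\inf_{d\in D}\|x-d\|$ (with $\mathrm{dist}(x,\emptyset)=\infty$), $\mathbb{B}(0,r)$ is the closed $\|\cdot\|$-ball, and the excess of $C$ over $D$ is $\mathrm{exs}(C;D)=\sup_{x\in C}\mathrm{dist}(x,D)$ if $C,D\neq\emptyset$, $=\infty$ if $C\neq\emptyset=D$, and $=0$ if $C=\emptyset$. The truncated Hausdorff distance is $\hat d_r(C,D)=\max\{\mathrm{exs}(C\cap\mathbb{B}(0,r);D),\ \mathrm{exs}(D\cap\mathbb{B}(0,r);C)\}$. *)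

From Stdlib Require Import Reals Lra ClassicalEpsilon.
From Stdlib Require Fin.
Open Scope R_scope.

Inductive Rbar : Type := Finite (r : R) | PInf | MInf.

Definition Rbar_le (x y : Rbar) : Prop :=
  match x, y with
  | MInf, _ => True
  | _, PInf => True
  | Finite a, Finite b => a <= b
  | _, _ => False
  end.
Definition Rbar_lt (x y : Rbar) : Prop := Rbar_le x y /\ x <> y.

(* addition; the ambiguous case +oo + -oo is never used below (set to +oo) *)
Definition Rbar_plus (x y : Rbar) : Rbar :=
  match x, y with
  | Finite a, Finite b => Finite (a + b)
  | PInf, _ | _, PInf => PInf
  | _, _ => MInf
  end.

Definition Rbar_max (x y : Rbar) : Rbar :=
  match excluded_middle_informative (Rbar_le x y) with
  | left _ => y | right _ => x end.

(* multiplication of an extended real by a real scalar c, with 0 * (+-oo) = 0 *)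
Definition Rbar_scal (c : R) (x : Rbar) : Rbar :=
  match x with
  | Finite a => Finite (c * a)
  | PInf => match Rlt_dec 0 c with left _ => PInf | right _ =>
              match Req_dec_T c 0 with left _ => Finite 0 | right _ => MInf end end
  | MInf => match Rlt_dec 0 c with left _ => MInf | right _ =>
              match Req_dec_T c 0 with left _ => Finite 0 | right _ => PInf end end
  end.

Definition Rbar_opp (x : Rbar) : Rbar :=
  match x with Finite a => Finite (- a) | PInf => MInf | MInf => PInf end.

(* supremum in [-oo,+oo] of a set of reals (sup of empty set = -oo) *)
Definition Rsup (E : R -> Prop) : Rbar :=
  match excluded_middle_informative (exists x, E x) with
  | left ne =>
      match excluded_middle_informative (bound E) with
      | left b => Finite (proj1_sig (completeness E b ne))
      | right _ => PInf
      end
  | right _ => MInf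
  end.

(* infimum of a set of reals (inf of empty set = +oo) *)
Definition Rinf (E : R -> Prop) : Rbar := Rbar_opp (Rsup (fun r => E (- r))).

Definition Rbar_sup (S : Rbar -> Prop) : Rbar :=
  match excluded_middle_informative (S PInf) with
  | left _ => PInf
  | right _ => Rsup (fun r => S (Finite r))
  end.

Definition vec (n : nat) : Type := Fin.t n -> R.

Fixpoint fin_sum (n : nat) : (Fin.t n -> R) -> R :=
  match n with
  | O => fun _ => 0
  | S k => fun f => f Fin.F1 + fin_sum k (fun i => f (Fin.FS i))
  end.

Definition norm2 {n : nat} (x : vec n) : R := sqrt (fin_sum n (fun i => x i ^ 2)).
Definition vsub {n : nat} (x y : vec n) : vec n := fun i => x i - y i.

Definition ball2 {n : nat} (r : R) (x : vec n) : Prop := norm2 x <= r.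

Definition sup_ball {n : nat} (r : R) (phi : vec n -> R) : Rbar :=
  Rsup (fun y => exists x : vec n, ball2 r x /\ y = phi x).

Definition lipschitz_mod {k : nat} (psi : vec k -> R) (kappa : R -> R) : Prop :=
  (forall r, 0 <= r -> 0 <= kappa r) /\
  (forall r, 0 <= r -> forall u ubar : vec k, ball2 r u -> ball2 r ubar ->
     Rabs (psi u - psi ubar) <= kappa r * norm2 (vsub u ubar)).

Definition proper {n : nat} (f : vec n -> Rbar) : Prop :=
  (forall x, f x <> MInf) /\ (exists x r, f x = Finite r).

Definition epi {n : nat} (f : vec n -> Rbar) (p : vec n * R) : Prop :=
  Rbar_le (f (fst p)) (Finite (snd p)).

Definition fplus {n : nat} (f0 : vec n -> Rbar) (phi : vec n -> R) : vec n -> Rbar :=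
  fun x => Rbar_plus (f0 x) (Finite (phi x)).

Definition pnorm {n : nat} (p : vec n * R) : R := Rmax (norm2 (fst p)) (Rabs (snd p)).
Definition psub {n : nat} (p q : vec n * R) : vec n * R :=
  (vsub (fst p) (fst q), snd p - snd q).
Definition pball {n : nat} (r : R) (p : vec n * R) : Prop := pnorm p <= r.

Definition dist {n : nat} (p : vec n * R) (D : vec n * R -> Prop) : Rbar :=
  Rinf (fun t => exists d, D d /\ t = pnorm (psub p d)).

Definition exs {n : nat} (C D : vec n * R -> Prop) : Rbar :=
  match excluded_middle_informative (exists c, C c) with
  | right _ => Finite 0
  | left _ =>
      match excluded_middle_informative (exists d, D d) with
      | right _ => PInf
      | left _ => Rbar_sup (fun t => exists c, C c /\ t = dist c D)
      end
  end.

Definition dhat {n : nat} (r : R) (C D : vec n * R -> Prop) : Rbar :=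
  Rbar_max (exs (fun p => C p /\ pball r p) D) (exs (fun p => D p /\ pball r p) C).

(* A point (x, a) of epi f near the origin lifts to the point (x, a - h(F x)) of epi f0,
   which lies in the ball of radius rhobar; there it is close to some (y, b) in epi g0,
   and (y, b + h(G y)) lies in epi g.  The height error is controlled by
   |h(F x) - h(G y)| <= kappa (|F x - G x| + |G x - G y|), and |G x - G y| is at most
   sqrt m lambda |x - y| since every component of G is lambda-Lipschitz.  The radius
   rhohat is chosen so that y stays in the region where these moduli apply. *)

From Pilot Require Import Defs.
From Stdlib Require Import Reals Lra Classical ClassicalEpsilon.
Open Scope R_scope.

Lemma Rbar_le_trans a b c : Rbar_le a b -> Rbar_le b c -> Rbar_le a c.
Proof. destruct a, b, c; simpl; intros; try lra; tauto. Qed.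

Lemma Rbar_le_total a b : Rbar_le a b \/ Rbar_le b a.
Proof.
  destruct a, b; simpl; auto.
  destruct (Rle_dec r r0); [left | right]; lra.
Qed.

Lemma Rbar_max_l a b : Rbar_le a (Rbar_max a b).
Proof.
  unfold Rbar_max; destruct (excluded_middle_informative _); auto.
  destruct a; simpl; lra || tauto.
Qed.

Lemma Rbar_max_r a b : Rbar_le b (Rbar_max a b).
Proof.
  unfold Rbar_max; destruct (excluded_middle_informative _) as [H | H].
  - destruct b; simpl; lra || tauto.
  - destruct (Rbar_le_total a b); tauto.
Qed.

Lemma Rbar_max_le a b c : Rbar_le a c -> Rbar_le b c -> Rbar_le (Rbar_max a b) c.
Proof. unfold Rbar_max; destruct (excluded_middle_informative _); auto. Qed.

Lemma Rbar_plus_Finite_le a M b :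
  Rbar_le (Rbar_plus (Finite a) M) (Finite b) -> Rbar_le M (Finite (b - a)).
Proof. destruct M; simpl; lra || tauto. Qed.

Lemma Rbar_lt_Finite a b : Rbar_lt (Finite a) (Finite b) -> a < b.
Proof. intros [Hle Hne]; simpl in Hle; destruct Hle; [assumption | congruence]. Qed.

Lemma Rsup_ub (E : R -> Prop) y : E y -> Rbar_le (Finite y) (Rsup E).
Proof.
  intro Hy; unfold Rsup.
  destruct (excluded_middle_informative _) as [ne | nne]; [| exfalso; eauto].
  destruct (excluded_middle_informative (bound E)) as [b | nb]; simpl; [| exact I].
  destruct (proj2_sig (completeness E b ne)) as [Hub _]; auto.
Qed.

Lemma Rsup_Finite (E : R -> Prop) b : (exists y, E y) -> (forall y, E y -> y <= b) ->
  exists s, Rsup E = Finite s /\ s <= b.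
Proof.
  intros ne H; unfold Rsup.
  destruct (excluded_middle_informative _) as [ne' | nne]; [| tauto].
  destruct (excluded_middle_informative (bound E)) as [bd | nb].
  - destruct (proj2_sig (completeness E bd ne')) as [_ Hl].
    eexists; split; [reflexivity | apply Hl; intros y Hy; auto].
  - exfalso; apply nb; exists b; intros y Hy; auto.
Qed.

Lemma Rsup_le (E : R -> Prop) b : (forall y, E y -> y <= b) -> Rbar_le (Rsup E) (Finite b).
Proof.
  intro H. destruct (classic (exists y, E y)) as [ne | nne].
  - destruct (Rsup_Finite E b ne H) as [s [-> Hs]]; exact Hs.
  - unfold Rsup; destruct (excluded_middle_informative _); [tauto | exact I].
Qed.

Lemma Rinf_Finite (E : R -> Prop) : (exists y, E y) -> (forall y, E y -> 0 <= y) ->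
  exists r, Rinf E = Finite r /\ 0 <= r.
Proof.
  intros [y Hy] H.
  destruct (Rsup_Finite (fun r => E (- r)) 0) as [s [Hs Hs0]].
  - exists (- y); rewrite Ropp_involutive; auto.
  - intros z Hz; specialize (H _ Hz); lra.
  - exists (- s); unfold Rinf; rewrite Hs; split; [reflexivity | lra].
Qed.

Lemma Rinf_le (E : R -> Prop) K :
  (forall eps, 0 < eps -> exists y, E y /\ y <= K + eps) -> Rbar_le (Rinf E) (Finite K).
Proof.
  intro H.
  assert (Hsup : forall y, E y -> Rbar_le (Finite (- y)) (Rsup (fun r => E (- r)))).
  { intros y Hy; apply Rsup_ub; rewrite Ropp_involutive; exact Hy. }
  unfold Rinf; destruct (Rsup (fun r => E (- r))) eqn:HS; simpl in *.
  - destruct (Rle_dec (- r) K) as [| Hn]; auto; exfalso.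
    destruct (H ((- K - r) / 2)) as [y [Hy Hy2]]; [lra |].
    specialize (Hsup y Hy); lra.
  - exact I.
  - destruct (H 1 Rlt_0_1) as [y [Hy _]]. exact (Hsup y Hy).
Qed.

Lemma Rinf_approx (E : R -> Prop) b eps : Rbar_le (Rinf E) (Finite b) -> 0 < eps ->
  exists y, E y /\ y < b + eps.
Proof.
  intros H He; apply NNPP; intro Hn.
  assert (Hb : Rbar_le (Rsup (fun r => E (- r))) (Finite (- (b + eps)))).
  { apply Rsup_le; intros z Hz.
    destruct (Rle_dec z (- (b + eps))) as [| Hz2]; auto.
    exfalso; apply Hn; exists (- z); split; auto; lra. }
  unfold Rinf in H; destruct (Rsup (fun r => E (- r))); simpl in *; lra || tauto.
Qed.

Lemma pnorm_nonneg {n} (p : vec n * R) : 0 <= pnorm p.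
Proof. unfold pnorm; eapply Rle_trans; [apply Rabs_pos | apply Rmax_r]. Qed.

Lemma pnorm_pair_le {n} (x : vec n) a r : pnorm (x, a) <= r <-> norm2 x <= r /\ Rabs a <= r.
Proof.
  unfold pnorm; simpl; split.
  - intro H; split; eapply Rle_trans; [apply Rmax_l | exact H | apply Rmax_r | exact H].
  - intros [Hx Ha]; apply Rmax_lub; auto.
Qed.

Lemma dist_Finite {n} (c : vec n * R) (D : vec n * R -> Prop) :
  (exists d, D d) -> exists r, Defs.dist c D = Finite r /\ 0 <= r.
Proof.
  intros [d Hd]; apply Rinf_Finite; [eauto |].
  intros y [d' [_ ->]]; apply pnorm_nonneg.
Qed.

Lemma dist_le {n} (c : vec n * R) (D : vec n * R -> Prop) K :
  (forall eps, 0 < eps -> exists d, D d /\ pnorm (psub c d) <= K + eps) ->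
  Rbar_le (Defs.dist c D) (Finite K).
Proof.
  intro H; apply Rinf_le; intros eps He.
  destruct (H eps He) as [d [Hd Hn]]; eauto.
Qed.

Lemma exs_nonneg {n} (C D : vec n * R -> Prop) : Rbar_le (Finite 0) (exs C D).
Proof.
  unfold exs; destruct (excluded_middle_informative _) as [[c Hc] |]; [| simpl; lra].
  destruct (excluded_middle_informative _) as [[d Hd] |]; [| exact I].
  unfold Rbar_sup; destruct (excluded_middle_informative _); [exact I |].
  destruct (dist_Finite c D) as [r [Hr Hr0]]; eauto.
  eapply Rbar_le_trans; [| apply Rsup_ub with (y := r); eauto]; simpl; auto.
Qed.

Lemma exs_le {n} (C D : vec n * R -> Prop) K : 0 <= K ->
  (forall c, C c -> forall eps, 0 < eps -> exists d, D d /\ pnorm (psub c d) <= K + eps) ->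
  Rbar_le (exs C D) (Finite K).
Proof.
  intros HK H; unfold exs.
  destruct (excluded_middle_informative _) as [[c Hc] |]; [| simpl; auto].
  destruct (excluded_middle_informative _) as [_ | nD].
  - unfold Rbar_sup; destruct (excluded_middle_informative _) as [[c' [Hc' HP]] | _].
    + rewrite HP; exact (dist_le c' D K (H c' Hc')).
    + apply Rsup_le; intros y [c' [Hc' Hy]].
      pose proof (dist_le c' D K (H c' Hc')) as Hl; rewrite <- Hy in Hl; exact Hl.
  - destruct (H c Hc 1 Rlt_0_1) as [d [Hd _]]; exfalso; eauto.
Qed.

Lemma exs_approx {n} (C D : vec n * R -> Prop) e c : Rbar_le (exs C D) (Finite e) -> C c ->
  forall eps, 0 < eps -> exists d, D d /\ pnorm (psub c d) < e + eps.
Proof.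
  intros H Hc eps He; unfold exs in H.
  destruct (excluded_middle_informative _) as [_ | nne]; [| exfalso; eauto].
  destruct (excluded_middle_informative _) as [[d0 Hd0] | _]; [| contradiction].
  unfold Rbar_sup in H.
  destruct (excluded_middle_informative _) as [_ | _]; [contradiction |].
  destruct (dist_Finite c D) as [r [Hr _]]; eauto.
  assert (Hre : r <= e).
  { refine (Rbar_le_trans (Finite r) _ (Finite e) _ H); apply Rsup_ub; eauto. }
  assert (Hd : Rbar_le (Defs.dist c D) (Finite e)) by (rewrite Hr; exact Hre).
  destruct (Rinf_approx _ _ _ Hd He) as [y [[d [Hd' ->]] Hy]]; eauto.
Qed.

Lemma dhat_nonneg {n} r (C D : vec n * R -> Prop) : Rbar_le (Finite 0) (dhat r C D).
Proof. eapply Rbar_le_trans; [apply (exs_nonneg (n := n)) | apply Rbar_max_l]. Qed.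

Lemma dhat_Finite_exs {n} r (C D : vec n * R -> Prop) e : dhat r C D = Finite e ->
  Rbar_le (exs (fun p => C p /\ pball r p) D) (Finite e) /\
  Rbar_le (exs (fun p => D p /\ pball r p) C) (Finite e).
Proof. intro He; rewrite <- He; split; [apply Rbar_max_l | apply Rbar_max_r]. Qed.

Lemma fin_sum_ext n (f g : Fin.t n -> R) : (forall i, f i = g i) -> fin_sum n f = fin_sum n g.
Proof.
  revert f g; induction n; intros f g H; simpl; auto.
  rewrite H, (IHn (fun i => f (Fin.FS i)) (fun i => g (Fin.FS i))); auto.
Qed.

Lemma fin_sum_le n (f g : Fin.t n -> R) : (forall i, f i <= g i) -> fin_sum n f <= fin_sum n g.
Proof.
  revert f g; induction n; intros f g H; simpl; [lra |].
  pose proof (H Fin.F1).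
  pose proof (IHn (fun i => f (Fin.FS i)) (fun i => g (Fin.FS i)) (fun i => H _)); lra.
Qed.

Lemma fin_sum_const n c : fin_sum n (fun _ => c) = INR n * c.
Proof. induction n; simpl fin_sum; [simpl; lra |]. rewrite IHn, S_INR; ring. Qed.

Lemma fin_sum_add n (f g : Fin.t n -> R) :
  fin_sum n (fun i => f i + g i) = fin_sum n f + fin_sum n g.
Proof.
  revert f g; induction n; intros f g; simpl; [lra |].
  rewrite (IHn (fun i => f (Fin.FS i)) (fun i => g (Fin.FS i))); ring.
Qed.

Lemma fin_sum_scal n c (f : Fin.t n -> R) : fin_sum n (fun i => c * f i) = c * fin_sum n f.
Proof.
  revert f; induction n; intros f; simpl; [lra |].
  rewrite (IHn (fun i => f (Fin.FS i))); ring.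
Qed.

Lemma fin_sum_nonneg n (f : Fin.t n -> R) : (forall i, 0 <= f i) -> 0 <= fin_sum n f.
Proof. intro H; rewrite <- (Rmult_0_r (INR n)), <- fin_sum_const; apply fin_sum_le; auto. Qed.

Lemma fin_sum_sqr_nonneg n (f : Fin.t n -> R) : 0 <= fin_sum n (fun i => f i ^ 2).
Proof. apply fin_sum_nonneg; intro; apply pow2_ge_0. Qed.

(* Induction on n: the step is |a0 b0 + u v| <= sqrt((a0^2 + u^2)(b0^2 + v^2)),
   which is Lagrange's identity (a0 v - u b0)^2 >= 0. *)
Lemma fin_sum_cauchy_schwarz n (a b : Fin.t n -> R) :
  fin_sum n (fun i => a i * b i) <=
  sqrt (fin_sum n (fun i => a i ^ 2)) * sqrt (fin_sum n (fun i => b i ^ 2)).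
Proof.
  revert a b; induction n; intros a b; cbn [fin_sum].
  - rewrite sqrt_0; lra.
  - specialize (IHn (fun i => a (Fin.FS i)) (fun i => b (Fin.FS i))).
    pose proof (fin_sum_sqr_nonneg n (fun i => a (Fin.FS i))) as HA.
    pose proof (fin_sum_sqr_nonneg n (fun i => b (Fin.FS i))) as HC.
    set (A := fin_sum n (fun i => a (Fin.FS i) ^ 2)) in *.
    set (C := fin_sum n (fun i => b (Fin.FS i) ^ 2)) in *.
    set (u := sqrt A); set (v := sqrt C).
    assert (Hu : A = u ^ 2) by (unfold u; simpl; rewrite Rmult_1_r, sqrt_sqrt; auto).
    assert (Hv : C = v ^ 2) by (unfold v; simpl; rewrite Rmult_1_r, sqrt_sqrt; auto).
    set (a0 := a Fin.F1) in *; set (b0 := b Fin.F1) in *.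
    apply Rle_trans with (a0 * b0 + u * v); [unfold u, v; lra |].
    rewrite Hu, Hv, <- sqrt_mult by (apply Rplus_le_le_0_compat; apply pow2_ge_0).
    apply Rle_trans with (Rabs (a0 * b0 + u * v)); [apply Rle_abs |].
    rewrite <- sqrt_Rsqr_abs; apply sqrt_le_1_alt; unfold Rsqr.
    pose proof (pow2_ge_0 (a0 * v - u * b0)); nra.
Qed.

Lemma norm2_nonneg {n} (x : vec n) : 0 <= norm2 x.
Proof. apply sqrt_pos. Qed.

Lemma norm2_ext {n} (x y : vec n) : (forall i, x i = y i) -> norm2 x = norm2 y.
Proof. intro H; unfold norm2; f_equal; apply fin_sum_ext; intro i; rewrite H; auto. Qed.

Lemma norm2_zero {n} : norm2 (fun _ : Fin.t n => 0) = 0.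
Proof.
  unfold norm2; rewrite (fin_sum_ext _ _ (fun _ => 0)) by (intro; ring).
  rewrite fin_sum_const, Rmult_0_r; apply sqrt_0.
Qed.

Lemma norm2_opp {n} (a : vec n) : norm2 (fun i => - a i) = norm2 a.
Proof. unfold norm2; f_equal; apply fin_sum_ext; intro; ring. Qed.

Lemma norm2_triangle {n} (a b : vec n) : norm2 (fun i => a i + b i) <= norm2 a + norm2 b.
Proof.
  unfold norm2.
  pose proof (fin_sum_sqr_nonneg n a) as HA; pose proof (fin_sum_sqr_nonneg n b) as HC.
  pose proof (fin_sum_cauchy_schwarz n a b) as Hcs.
  set (A := fin_sum n (fun i => a i ^ 2)) in *; set (C := fin_sum n (fun i => b i ^ 2)) in *.
  assert (E : fin_sum n (fun i => (a i + b i) ^ 2) = A + 2 * fin_sum n (fun i => a i * b i) + C).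
  { unfold A, C; rewrite <- fin_sum_scal, <- !fin_sum_add; apply fin_sum_ext; intro; ring. }
  rewrite E. pose proof (sqrt_pos A); pose proof (sqrt_pos C).
  rewrite <- (sqrt_pow2 (sqrt A + sqrt C)) by lra; apply sqrt_le_1_alt.
  pose proof (sqrt_sqrt A HA); pose proof (sqrt_sqrt C HC); nra.
Qed.

Lemma norm2_vsub_le {n} (a b : vec n) : norm2 (vsub a b) <= norm2 a + norm2 b.
Proof.
  rewrite <- (norm2_opp b), (norm2_ext (vsub a b) (fun i => a i + - b i)) by reflexivity.
  apply norm2_triangle.
Qed.

Lemma norm2_vsub_sym {n} (a b : vec n) : norm2 (vsub a b) = norm2 (vsub b a).
Proof. rewrite <- norm2_opp; apply norm2_ext; intro; unfold vsub; ring. Qed.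

Lemma norm2_vsub_triangle {n} (a b c : vec n) :
  norm2 (vsub a c) <= norm2 (vsub a b) + norm2 (vsub b c).
Proof.
  rewrite (norm2_ext (vsub a c) (fun i => vsub a b i + vsub b c i)) by (intro; unfold vsub; ring).
  apply norm2_triangle.
Qed.

Lemma norm2_le_norm2_add_vsub {n} (x y : vec n) : norm2 y <= norm2 x + norm2 (vsub x y).
Proof.
  rewrite (norm2_ext y (vsub x (vsub x y))) by (intro; unfold vsub; ring).
  apply norm2_vsub_le.
Qed.

Lemma norm2_le_sqrt_dim {m} (v : vec m) t :
  (forall i, Rabs (v i) <= t) -> norm2 v <= sqrt (INR m) * t.
Proof.
  intro H. destruct m as [| m].
  - unfold norm2; simpl; rewrite sqrt_0; lra.
  - assert (Ht : 0 <= t) by (eapply Rle_trans; [apply Rabs_pos | apply (H Fin.F1)]).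
    unfold norm2; apply Rle_trans with (sqrt (INR (S m) * t ^ 2)).
    + apply sqrt_le_1_alt; rewrite <- fin_sum_const; apply fin_sum_le; intro i.
      rewrite <- pow2_abs; pose proof (H i); pose proof (Rabs_pos (v i)); nra.
    + rewrite sqrt_mult, sqrt_pow2 by auto using pos_INR, pow2_ge_0; lra.
Qed.

Lemma ball2_zero {n} r : 0 <= r -> ball2 r (fun _ : Fin.t n => 0).
Proof. intro Hr; unfold ball2; rewrite norm2_zero; exact Hr. Qed.

Lemma sup_ball_ub {n} r (phi : vec n -> R) x :
  ball2 r x -> Rbar_le (Finite (phi x)) (sup_ball r phi).
Proof. intro Hx; apply Rsup_ub; exists x; auto. Qed.

Lemma sup_ball_max_le {n} r (phi psi : vec n -> R) b :
  Rbar_le (Rbar_max (sup_ball r phi) (sup_ball r psi)) (Finite b) ->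
  forall x, ball2 r x -> phi x <= b /\ psi x <= b.
Proof.
  intros H x Hx.
  pose proof (Rbar_le_trans _ _ _ (Rbar_max_l (sup_ball r phi) (sup_ball r psi)) H) as Hphi.
  pose proof (Rbar_le_trans _ _ _ (Rbar_max_r (sup_ball r phi) (sup_ball r psi)) H) as Hpsi.
  exact (conj (Rbar_le_trans _ _ (Finite b) (sup_ball_ub r phi x Hx) Hphi)
              (Rbar_le_trans _ _ (Finite b) (sup_ball_ub r psi x Hx) Hpsi)).
Qed.

Lemma sup_ball_Finite {n} r (phi : vec n -> R) b : 0 <= r ->
  (forall x, ball2 r x -> 0 <= phi x <= b) ->
  exists s, sup_ball r phi = Finite s /\ 0 <= s /\ forall x, ball2 r x -> phi x <= s.
Proof.
  intros Hr H.
  destruct (Rsup_Finite (fun y => exists x, ball2 r x /\ y = phi x) b) as [s [Hs _]].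
  - exists (phi (fun _ => 0)), (fun _ => 0); split; [apply ball2_zero |]; auto.
  - intros y [x [Hx ->]]; apply H, Hx.
  - assert (Hub : forall x, ball2 r x -> phi x <= s).
    { intros x Hx; pose proof (sup_ball_ub r phi x Hx) as Hle.
      unfold sup_ball in Hle; rewrite Hs in Hle; exact Hle. }
    exists s; split; [exact Hs | split; [| exact Hub]].
    pose proof (H _ (ball2_zero r Hr)); pose proof (Hub _ (ball2_zero r Hr)); lra.
Qed.

(* For [m = 0] the modulus [lambda] is unconstrained, but it is multiplied by [sqrt 0]. *)
Lemma components_lipschitz_norm2 {n m} (G : vec n -> vec m) lambda r :
  0 <= r -> (forall i, lipschitz_mod (fun x => G x i) lambda) ->
  0 <= sqrt (INR m) * lambda r /\
  forall x y, ball2 r x -> ball2 r y ->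
    norm2 (vsub (G x) (G y)) <= sqrt (INR m) * lambda r * norm2 (vsub x y).
Proof.
  intros Hr HG; split.
  - destruct m as [| m]; [simpl; rewrite sqrt_0; lra |].
    apply Rmult_le_pos; [apply sqrt_pos | exact (proj1 (HG Fin.F1) r Hr)].
  - intros x y Hx Hy; rewrite Rmult_assoc; apply norm2_le_sqrt_dim.
    intro i; exact (proj2 (HG i) r Hr x y Hx Hy).
Qed.

Lemma comp_lipschitz_diff {n m} (h : vec m -> R) (F G : vec n -> vec m)
  (rho rhohat rhostar k L s : R) :
  0 <= k -> rho <= rhohat ->
  (forall x, ball2 rhohat x -> ball2 rhostar (F x) /\ ball2 rhostar (G x)) ->
  (forall u v, ball2 rhostar u -> ball2 rhostar v -> Rabs (h u - h v) <= k * norm2 (vsub u v)) ->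
  (forall x y, ball2 rhohat x -> ball2 rhohat y -> norm2 (vsub (G x) (G y)) <= L * norm2 (vsub x y)) ->
  (forall x, ball2 rho x -> norm2 (vsub (F x) (G x)) <= s) ->
  forall x y, ball2 rho x -> ball2 rhohat y ->
    Rabs (h (F x) - h (G y)) <= k * s + k * L * norm2 (vsub x y).
Proof.
  intros Hk Hr Hbnd Hh HG HFG x y Hx Hy.
  assert (Hx' : ball2 rhohat x) by (unfold ball2 in *; lra).
  pose proof (norm2_vsub_triangle (F x) (G x) (G y)).
  pose proof (HG x y Hx' Hy); pose proof (HFG x Hx).
  eapply Rle_trans; [apply Hh; [apply Hbnd | apply Hbnd]; auto |].
  rewrite Rmult_assoc, <- Rmult_plus_distr_l; apply Rmult_le_compat_l; lra.
Qed.

(* Holds for every [f0] (both sides are trivial when [f0 x] is infinite), which is why the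
   properness of [f0] and [g0] is never used. *)
Lemma epi_fplus {n} (f0 : vec n -> Rbar) (phi : vec n -> R) x a :
  epi (fplus f0 phi) (x, a) <-> epi f0 (x, a - phi x).
Proof. unfold epi, fplus; simpl; destruct (f0 x); simpl; lra || tauto. Qed.

Lemma exs_epi_fplus_le {n} (f0 g0 : vec n -> Rbar) (phi psi : vec n -> R)
  (rho rhobar rhohat e s L : R) :
  0 <= e -> 0 <= s -> 0 <= L -> rho + e < rhohat ->
  (forall x, ball2 rho x -> rho + Rabs (phi x) <= rhobar) ->
  (forall x y, ball2 rho x -> ball2 rhohat y -> Rabs (phi x - psi y) <= s + L * norm2 (vsub x y)) ->
  Rbar_le (exs (fun p => epi f0 p /\ pball rhobar p) (epi g0)) (Finite e) ->
  Rbar_le (exs (fun p => epi (fplus f0 phi) p /\ pball rho p) (epi (fplus g0 psi)))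
          (Finite ((1 + L) * e + s)).
Proof.
  intros He Hs HL Hhat Hbar Hphi Hex.
  apply exs_le; [nra |].
  intros [x a] [Hepi Hball] eps Heps.
  apply pnorm_pair_le in Hball as [Hx Ha].
  assert (Hlift : epi f0 (x, a - phi x) /\ pball rhobar (x, a - phi x)).
  { split; [now apply epi_fplus |].
    pose proof (Hbar x Hx); pose proof (Rabs_pos (phi x)).
    pose proof (Rabs_triang a (- phi x)) as Htri.
    rewrite Rabs_Ropp, <- (Rminus_def a (phi x)) in Htri.
    apply pnorm_pair_le; split; lra. }
  set (delta := Rmin (eps / (1 + L)) ((rhohat - rho - e) / 2)).
  assert (Hdelta : 0 < delta) by (apply Rmin_pos; [apply Rdiv_lt_0_compat |]; lra).
  assert (HLdelta : (1 + L) * delta <= eps).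
  { apply Rle_trans with ((1 + L) * (eps / (1 + L))).
    - apply Rmult_le_compat_l; [lra | apply Rmin_l].
    - right; field; lra. }
  pose proof (Rmin_r (eps / (1 + L)) ((rhohat - rho - e) / 2)) as Hdelta2; fold delta in Hdelta2.
  destruct (exs_approx _ _ _ _ Hex Hlift delta Hdelta) as [[y b] [Hyb Hd]].
  apply Rmax_Rlt in Hd as [Hxy Hab]; simpl in Hxy, Hab.
  assert (Hy : ball2 rhohat y) by (pose proof (norm2_le_norm2_add_vsub x y); unfold ball2; lra).
  exists (y, b + psi y); split.
  - apply epi_fplus; replace (b + psi y - psi y) with b by ring; exact Hyb.
  - pose proof (Hphi x y Hx Hy).
    pose proof (Rabs_triang (a - phi x - b) (phi x - psi y)).
    replace (a - phi x - b + (phi x - psi y)) with (a - (b + psi y)) in * by ring.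
    pose proof (Rmult_le_compat_l L _ _ HL (Rlt_le _ _ Hxy)).
    apply pnorm_pair_le; simpl; split; nra.
Qed.

Lemma exs_epi_comp_le {n m} (f0 g0 : vec n -> Rbar) (h : vec m -> R) (F G : vec n -> vec m)
  (rho rhobar rhohat rhostar k L e s : R) :
  0 <= e -> 0 <= s -> 0 <= k -> 0 <= L -> rho + e < rhohat ->
  (forall x, ball2 rho x -> rho + Rabs (h (F x)) <= rhobar) ->
  (forall x, ball2 rhohat x -> ball2 rhostar (F x) /\ ball2 rhostar (G x)) ->
  (forall u v, ball2 rhostar u -> ball2 rhostar v -> Rabs (h u - h v) <= k * norm2 (vsub u v)) ->
  (forall x y, ball2 rhohat x -> ball2 rhohat y -> norm2 (vsub (G x) (G y)) <= L * norm2 (vsub x y)) ->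
  (forall x, ball2 rho x -> norm2 (vsub (F x) (G x)) <= s) ->
  Rbar_le (exs (fun p => epi f0 p /\ pball rhobar p) (epi g0)) (Finite e) ->
  Rbar_le (exs (fun p => epi (fplus f0 (fun x => h (F x))) p /\ pball rho p)
               (epi (fplus g0 (fun x => h (G x)))))
          (Finite ((1 + k * L) * e + k * s)).
Proof.
  intros He Hs Hk HL Hhat Hbar Hbnd Hh HG HFG.
  apply exs_epi_fplus_le with rhohat; auto using Rmult_le_pos.
  apply (comp_lipschitz_diff h F G rho rhohat rhostar); auto; lra.
Qed.

Theorem mainTheorem14 (n m : nat)
  (f0 g0 : vec n -> Rbar) (h : vec m -> R) (kappa lambda : R -> R)
  (F G : vec n -> vec m)
  (Hf0 : proper f0) (Hg0 : proper g0)
  (Hh : lipschitz_mod h kappa)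
  (HF : forall i : Fin.t m, lipschitz_mod (fun x => F x i) lambda)
  (HG : forall i : Fin.t m, lipschitz_mod (fun x => G x i) lambda)
  (rho rhobar rhohat rhostar : R)
  (Hrho : 0 <= rho)
  (Hrhobar : Rbar_le
     (Rbar_plus (Finite rho)
        (Rbar_max (sup_ball rho (fun x => Rabs (h (F x))))
                  (sup_ball rho (fun x => Rabs (h (G x))))))
     (Finite rhobar))
  (Hrhohat : Rbar_lt (Rbar_plus (Finite rho) (dhat rhobar (epi f0) (epi g0))) (Finite rhohat))
  (Hrhostar : Rbar_le
     (Rbar_max (sup_ball rhohat (fun x => norm2 (F x)))
               (sup_ball rhohat (fun x => norm2 (G x))))
     (Finite rhostar)) :
  Rbar_le
    (dhat rho (epi (fplus f0 (fun x => h (F x)))) (epi (fplus g0 (fun x => h (G x)))))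
    (Rbar_plus
       (Rbar_scal (1 + sqrt (INR m) * kappa rhostar * lambda rhohat)
          (dhat rhobar (epi f0) (epi g0)))
       (Rbar_scal (kappa rhostar) (sup_ball rho (fun x => norm2 (vsub (F x) (G x)))))).
Proof.
  pose proof (dhat_nonneg rhobar (epi f0) (epi g0)) as He0.
  destruct (dhat rhobar (epi f0) (epi g0)) as [e | |] eqn:He;
    [| destruct Hrhohat as [[] _] | destruct He0].
  apply dhat_Finite_exs in He as [Hexf Hexg]; simpl in He0.
  apply Rbar_lt_Finite in Hrhohat.
  pose proof (sup_ball_max_le _ _ _ _ (Rbar_plus_Finite_le _ _ _ Hrhobar)) as Hbar.
  pose proof (sup_ball_max_le _ _ _ _ Hrhostar) as Hbnd.
  assert (Hrhohat0 : 0 <= rhohat) by lra.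
  assert (Hrhostar0 : 0 <= rhostar).
  { pose proof (norm2_nonneg (F (fun _ => 0))).
    pose proof (proj1 (Hbnd _ (ball2_zero rhohat Hrhohat0))); lra. }
  destruct (sup_ball_Finite rho (fun x => norm2 (vsub (F x) (G x))) (2 * rhostar) Hrho)
    as [s [-> [Hs0 HFG]]].
  { intros x Hx; split; [apply norm2_nonneg |].
    destruct (Hbnd x ltac:(unfold ball2 in *; lra)); pose proof (norm2_vsub_le (F x) (G x)); lra. }
  destruct Hh as [Hk Hh].
  destruct (components_lipschitz_norm2 F lambda rhohat Hrhohat0 HF) as [HL HFL].
  destruct (components_lipschitz_norm2 G lambda rhohat Hrhohat0 HG) as [_ HGL].
  cbn [Rbar_scal Rbar_plus].
  replace (1 + sqrt (INR m) * kappa rhostar * lambda rhohat)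
    with (1 + kappa rhostar * (sqrt (INR m) * lambda rhohat)) by ring.
  apply Rbar_max_le; eapply exs_epi_comp_le; eauto.
  - intros x Hx; specialize (Hbar x Hx); lra.
  - intros x Hx; specialize (Hbar x Hx); lra.
  - intros x Hx; apply and_comm, Hbnd, Hx.
  - intros x Hx; rewrite norm2_vsub_sym; auto.
Qed.
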